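(* Suppose $\{L_t : t\in[0,1]\}$ is a continuous family of oriented lines in $\mathbb{R}^3$ such that $L_1$ is the line $L_0$ with the opposite orientation. Then there exist parameters $r,s\in[0,1]$ such that $L_r$ and $L_s$ are perpendicular, intersecting lines.
   Context: An oriented line in $\mathbb{R}^3$ is a line together with a choice of one of its two unit direction vectors. Continuity of the family is understood in the space of oriented lines, e.g. via the direction vector $a_t$ and the moment vector $p_t\times a_t$ for any point $p_t\in L_t$ varying continuously in $t$. *)

From Stdlib Require Import Reals Lra.
Open Scope R_scope.

Definition vec : Type := (R * R * R)%type.
Definition vx (v : vec) : R := fst (fst v).
Definition vy (v : vec) : R := snd (fst v).
Definition vz (v : vec) : R := snd v.

Definition dot (u v : vec) : R := vx u * vx v + vy u * vy v + vz u * vz v.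
Definition cross (u v : vec) : vec :=
  ((vy u * vz v - vz u * vy v, vz u * vx v - vx u * vz v),
    vx u * vy v - vy u * vx v).
Definition vopp (v : vec) : vec := ((- vx v, - vy v), - vz v).

Definition continuous_on01 (f : R -> R) : Prop :=
  forall t, 0 <= t <= 1 -> forall eps, 0 < eps ->
    exists delta, 0 < delta /\
      forall u, 0 <= u <= 1 -> Rabs (u - t) < delta -> Rabs (f u - f t) < eps.

Definition vcontinuous_on01 (f : R -> vec) : Prop :=
  continuous_on01 (fun t => vx (f t)) /\
  continuous_on01 (fun t => vy (f t)) /\
  continuous_on01 (fun t => vz (f t)).

(* An oriented line in Pluecker coordinates: unit direction a and moment m
   with a.m = 0; the point set is { x | x * a = m } (m = p * a for any p on it). *)
Definition oriented_line (a m : vec) : Prop := dot a a = 1 /\ dot a m = 0.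
Definition on_line (a m : vec) (x : vec) : Prop := cross x a = m.

Definition line_family (a m : R -> vec) : Prop :=
  (forall t, 0 <= t <= 1 -> oriented_line (a t) (m t)) /\
  vcontinuous_on01 a /\ vcontinuous_on01 m.

(* Suppose no two lines of the family meet perpendicularly.  For unit directions,
   [a_p . a_q = 0] says that L_p and L_q are perpendicular, and then the reciprocal
   product [a_p . m_q + m_p . a_q] vanishes iff they meet; so the planar map
   F(p,q) = (a_p . a_q, a_p . m_q + m_p . a_q) has no zero on the square [0,1]^2.
   On the diagonal F = (1,0), and reversing the orientation of L_0 gives
   F(t,1) = -F(0,t).  Going around the triangle {p <= q}, F turns by theta along
   p = 0, by theta again along q = 1, and not at all along the diagonal, where theta
   is the angle turned by F(0,.) from (1,0) to (-1,0), an odd multiple of pi.  The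
   total winding 2 theta is then nonzero, which is impossible for a map defined on
   the whole triangle.  The winding is computed on a fine grid, where neighbouring
   values of F make acute angles that atan measures and adds up exactly. *)

From Stdlib Require Import Reals Lra Lia Nsatz Classical ClassicalEpsilon.
From Coquelicot Require Import Hierarchy Continuity Compactness.
Open Scope R_scope.

Definition dot2 (u v : R * R) : R := fst u * fst v + snd u * snd v.
Definition cross2 (u v : R * R) : R := fst u * snd v - snd u * fst v.
Definition opp2 (u : R * R) : R * R := (- fst u, - snd u).
Definition scale2 (l : R) (u : R * R) : R * R := (l * fst u, l * snd u).
Definition rot2 (th : R) (u : R * R) : R * R :=
  (fst u * cos th - snd u * sin th, fst u * sin th + snd u * cos th).

(* Meaningful only when [dot2 u v > 0]: then it is the oriented angle from [u] to [v]. *)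
Definition angle2 (u v : R * R) : R := atan (cross2 u v / dot2 u v).

Lemma dot2_self_pos_neq u : u <> (0, 0) -> dot2 u u > 0.
Proof.
  destruct u as [u1 u2]; unfold dot2; simpl; intros H.
  destruct (Rle_lt_dec (u1 * u1 + u2 * u2) 0); [|lra].
  exfalso. apply H. f_equal; nra.
Qed.

Lemma dot2_self_pos u v : dot2 u v > 0 -> dot2 v v > 0.
Proof.
  intros H. apply dot2_self_pos_neq. intros ->. unfold dot2 in H; simpl in H. lra.
Qed.

Lemma angle2_swap u v : angle2 v u = - angle2 u v.
Proof.
  unfold angle2, cross2, dot2. rewrite <- atan_opp. f_equal.
  replace (fst v * fst u + snd v * snd u) with (fst u * fst v + snd u * snd v) by ring.
  unfold Rdiv. ring.
Qed.

Lemma angle2_opp u v : angle2 (opp2 u) (opp2 v) = angle2 u v.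
Proof. unfold angle2, cross2, dot2, opp2; simpl. f_equal. f_equal; ring. Qed.

Lemma cos_pos_bound z : - PI < z < PI -> 0 < cos z -> - (PI / 2) < z < PI / 2.
Proof.
  intros Hz Hc. split.
  - destruct (Rlt_or_le (- (PI / 2)) z) as [|Hle]; auto.
    assert (cos (- z) <= 0) by (apply cos_le_0; lra). rewrite cos_neg in *. lra.
  - destruct (Rlt_or_le z (PI / 2)) as [|Hle]; auto.
    assert (cos z <= 0) by (apply cos_le_0; lra). lra.
Qed.

Lemma atan_add x y : 0 < 1 - x * y -> atan x + atan y = atan ((x + y) / (1 - x * y)).
Proof.
  intros Hxy.
  assert (Sx : 0 < sqrt (1 + x²)) by (apply sqrt_lt_R0; pose proof (Rle_0_sqr x); lra).
  assert (Sy : 0 < sqrt (1 + y²)) by (apply sqrt_lt_R0; pose proof (Rle_0_sqr y); lra).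
  assert (Hc : cos (atan x + atan y) = (1 - x * y) / (sqrt (1 + x²) * sqrt (1 + y²)))
    by (rewrite cos_plus, !cos_atan, !sin_atan; field; lra).
  assert (Hs : sin (atan x + atan y) = (x + y) / (sqrt (1 + x²) * sqrt (1 + y²)))
    by (rewrite sin_plus, !cos_atan, !sin_atan; field; lra).
  assert (Hrange : - (PI / 2) < atan x + atan y < PI / 2).
  { apply cos_pos_bound.
    - pose proof (atan_bound x). pose proof (atan_bound y). lra.
    - rewrite Hc. apply Rdiv_lt_0_compat; [lra | now apply Rmult_lt_0_compat]. }
  rewrite <- (atan_tan _ Hrange). f_equal. unfold tan. rewrite Hc, Hs. field. lra.
Qed.

Lemma angle2_add u v w :
  dot2 u v > 0 -> dot2 v w > 0 -> dot2 u w > 0 -> angle2 u v + angle2 v w = angle2 u w.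
Proof.
  intros Huv Hvw Huw. pose proof (dot2_self_pos u v Huv) as Hv.
  assert (Hd : dot2 u v * dot2 v w - cross2 u v * cross2 v w = dot2 v v * dot2 u w)
    by (unfold dot2, cross2; ring).
  assert (Hc : cross2 u v * dot2 v w + cross2 v w * dot2 u v = dot2 v v * cross2 u w)
    by (unfold dot2, cross2; ring).
  assert (Hden : 1 - cross2 u v / dot2 u v * (cross2 v w / dot2 v w)
                 = dot2 v v * dot2 u w / (dot2 u v * dot2 v w))
    by (rewrite <- Hd; field; lra).
  assert (Hnum : cross2 u v / dot2 u v + cross2 v w / dot2 v w
                 = dot2 v v * cross2 u w / (dot2 u v * dot2 v w))
    by (rewrite <- Hc; field; lra).
  unfold angle2. rewrite atan_add; rewrite Hden.
  - rewrite Hnum. f_equal. field. repeat split; lra.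
  - apply Rdiv_lt_0_compat; apply Rmult_lt_0_compat; lra.
Qed.

Lemma rot2_add a b u : rot2 a (rot2 b u) = rot2 (a + b) u.
Proof. unfold rot2; simpl. rewrite cos_plus, sin_plus. f_equal; ring. Qed.

Lemma rot2_0 u : rot2 0 u = u.
Proof. destruct u. unfold rot2; simpl. rewrite cos_0, sin_0. f_equal; ring. Qed.

Lemma rot2_scale th l u : rot2 th (scale2 l u) = scale2 l (rot2 th u).
Proof. unfold rot2, scale2; simpl; f_equal; ring. Qed.

Lemma angle2_rot2 u v :
  dot2 u v > 0 -> exists l, l > 0 /\ v = scale2 l (rot2 (angle2 u v) u).
Proof.
  intros Huv. assert (Hu : dot2 u u > 0) by (apply (dot2_self_pos v); unfold dot2 in *; lra).
  set (q := cross2 u v / dot2 u v).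
  assert (Hs : 0 < sqrt (1 + q²)) by (apply sqrt_lt_R0; pose proof (Rle_0_sqr q); lra).
  exists (sqrt (1 + q²) * dot2 u v / dot2 u u). split.
  - apply Rdiv_lt_0_compat; [apply Rmult_lt_0_compat|]; lra.
  - unfold angle2, rot2, scale2. fold q. rewrite cos_atan, sin_atan.
    destruct u as [u1 u2], v as [v1 v2]. unfold q, cross2, dot2 in *; simpl in *.
    f_equal; field; lra.
Qed.

Fixpoint rsum (f : nat -> R) (lo n : nat) : R :=
  match n with O => 0 | S n' => f lo + rsum f (S lo) n' end.

Lemma rsum_ext f g lo n :
  (forall j, (lo <= j < lo + n)%nat -> f j = g j) -> rsum f lo n = rsum g lo n.
Proof.
  revert lo; induction n as [|n IH]; intros lo H; simpl; auto.
  rewrite (H lo) by lia. rewrite (IH (S lo)); auto. intros; apply H; lia.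
Qed.

Lemma rsum_last f n lo : rsum f lo (S n) = rsum f lo n + f (lo + n)%nat.
Proof.
  revert lo; induction n as [|n IH]; intros lo.
  - simpl. rewrite Nat.add_0_r. ring.
  - change (rsum f lo (S (S n))) with (f lo + rsum f (S lo) (S n)).
    rewrite IH. replace (lo + S n)%nat with (S lo + n)%nat by lia. simpl. ring.
Qed.

Definition path_angle (f : nat -> R * R) (lo n : nat) : R :=
  rsum (fun j => angle2 (f j) (f (S j))) lo n.

Lemma path_angle_rot2 (f : nat -> R * R) n lo :
  (forall j, (lo <= j < lo + n)%nat -> dot2 (f j) (f (S j)) > 0) ->
  exists l, l > 0 /\ f (lo + n)%nat = scale2 l (rot2 (path_angle f lo n) (f lo)).
Proof.
  revert lo; induction n as [|n IH]; intros lo H.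
  - exists 1. split; [lra|]. rewrite Nat.add_0_r. unfold path_angle; simpl.
    rewrite rot2_0. destruct (f lo); unfold scale2; simpl; f_equal; ring.
  - destruct (IH (S lo)) as [l [Hl E]]; [intros; apply H; lia|].
    destruct (angle2_rot2 (f lo) (f (S lo))) as [k [Hk Ek]]; [apply H; lia|].
    exists (l * k). split; [nra|].
    replace (lo + S n)%nat with (S lo + n)%nat by lia.
    rewrite E, Ek, rot2_scale, rot2_add. unfold path_angle, scale2; simpl.
    rewrite (Rplus_comm (rsum _ _ _)). f_equal; ring.
Qed.

Section AcuteGrid.

Variable V : nat -> nat -> R * R.
Variable N : nat.
Variable w : R * R.

Hypothesis V_acute : forall i j i' j',
  (i <= N)%nat -> (j <= N)%nat -> (i' <= N)%nat -> (j' <= N)%nat ->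
  (i <= S i')%nat -> (i' <= S i)%nat -> (j <= S j')%nat -> (j' <= S j)%nat ->
  dot2 (V i j) (V i' j') > 0.
Hypothesis V_diag : forall i, (i <= N)%nat -> V i i = w.
Hypothesis V_last_col : forall i, (i <= N)%nat -> V i N = opp2 (V 0%nat i).

Let row_step i j := angle2 (V i j) (V i (S j)).
Let col_step i j := angle2 (V i j) (V (S i) j).
Let row_angle i := rsum (row_step i) i (N - i).

Lemma grid_cell_angle i j : (i < N)%nat -> (j < N)%nat ->
  row_step i j = col_step i j + row_step (S i) j - col_step i (S j).
Proof.
  intros. unfold row_step, col_step.
  rewrite <- (angle2_add (V i j) (V (S i) (S j)) (V i (S j))) by (apply V_acute; lia).
  rewrite <- (angle2_add (V i j) (V (S i) j) (V (S i) (S j))) by (apply V_acute; lia).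
  rewrite (angle2_swap (V i (S j))). ring.
Qed.

Lemma grid_strip_angle i n lo : (i < lo)%nat -> (lo + n <= N)%nat ->
  rsum (row_step i) lo n = col_step i lo - col_step i (lo + n) + rsum (row_step (S i)) lo n.
Proof.
  revert lo; induction n as [|n IH]; intros lo H1 H2; simpl.
  - rewrite Nat.add_0_r. ring.
  - rewrite IH, grid_cell_angle by lia.
    replace (S lo + n)%nat with (lo + S n)%nat by lia. ring.
Qed.

(* The first step of row [i] starts at the diagonal, where [V i i = V (S i) (S i)]. *)
Lemma row_angle_succ i : (i < N)%nat -> row_angle i = row_angle (S i) - col_step i N.
Proof.
  intros H. unfold row_angle.
  replace (N - i)%nat with (S (N - S i)) by lia. simpl rsum.
  rewrite grid_strip_angle by lia.
  replace (S i + (N - S i))%nat with N by lia.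
  unfold row_step at 1, col_step at 1.
  rewrite (V_diag i), <- (V_diag (S i)), angle2_swap by lia. ring.
Qed.

Lemma row_angle_0 k : (k <= N)%nat -> row_angle 0 = row_angle k - rsum (fun i => col_step i N) 0 k.
Proof.
  induction k as [|k IH]; intros H.
  - simpl. ring.
  - rewrite IH, row_angle_succ, rsum_last by lia. simpl. ring.
Qed.

Lemma acute_grid_antipodal_absurd : False.
Proof.
  assert (Hlast : rsum (fun i => col_step i N) 0 N = row_angle 0).
  { unfold row_angle. rewrite Nat.sub_0_r. apply rsum_ext.
    intros j Hj. unfold col_step. rewrite !V_last_col by lia. apply angle2_opp. }
  assert (Hzero : row_angle 0 = 0).
  { pose proof (row_angle_0 N (le_n N)) as H.
    unfold row_angle at 2 in H. rewrite Nat.sub_diag in H. simpl in H. lra. }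
  destruct (path_angle_rot2 (V 0%nat) N 0%nat) as [l [Hl E]]; [intros; apply V_acute; lia|].
  unfold row_angle in Hzero. rewrite Nat.sub_0_r in Hzero.
  simpl in E. change (path_angle (V 0%nat) 0 N) with (rsum (row_step 0) 0 N) in E.
  rewrite Hzero, rot2_0, V_last_col in E by lia.
  assert (H0 : dot2 (V 0%nat 0%nat) (V 0%nat 0%nat) > 0) by (apply V_acute; lia).
  destruct (V 0%nat 0%nat) as [v1 v2]. unfold opp2, scale2, dot2 in *; simpl in *.
  injection E as E1 E2. nra.
Qed.

End AcuteGrid.

Lemma dot2_pos_near c p q eta : 32 * (eta * eta) <= dot2 c c ->
  Rabs (fst p - fst c) < eta -> Rabs (snd p - snd c) < eta ->
  Rabs (fst q - fst c) < eta -> Rabs (snd q - snd c) < eta -> dot2 p q > 0.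
Proof.
  destruct c as [c1 c2], p as [p1 p2], q as [q1 q2]; unfold dot2; simpl.
  intros Hc A B C D.
  assert (Sq : forall x, Rabs x < eta -> x * x < eta * eta).
  { intros x Hx. pose proof (Rabs_pos x).
    replace (x * x) with (Rabs x * Rabs x) by (rewrite <- Rabs_mult; apply Rabs_right; nra).
    nra. }
  apply Sq in A, B, C, D.
  set (e1 := p1 - c1) in *. set (e2 := p2 - c2) in *.
  set (f1 := q1 - c1) in *. set (f2 := q2 - c2) in *.
  replace (p1 * q1 + p2 * q2) with
    (c1 * c1 + c2 * c2 + (c1 * e1 + c2 * e2) + (c1 * f1 + c2 * f2) + (e1 * f1 + e2 * f2))
    by (unfold e1, e2, f1, f2; ring).
  assert (0 <= (c1 / 2 + 2 * e1) ^ 2 + (c2 / 2 + 2 * e2) ^ 2)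
    by (apply Rplus_le_le_0_compat; apply pow2_ge_0).
  assert (0 <= (c1 / 2 + 2 * f1) ^ 2 + (c2 / 2 + 2 * f2) ^ 2)
    by (apply Rplus_le_le_0_compat; apply pow2_ge_0).
  assert (0 <= (e1 + f1) ^ 2 + (e2 + f2) ^ 2)
    by (apply Rplus_le_le_0_compat; apply pow2_ge_0).
  nra.
Qed.

Lemma dot2_pos_locally (F : R -> R -> R * R) u v :
  continuity_2d_pt (fun p q => fst (F p q)) u v ->
  continuity_2d_pt (fun p q => snd (F p q)) u v ->
  F u v <> (0, 0) ->
  exists r : posreal, forall p q p' q',
    Rabs (p - u) < r -> Rabs (q - v) < r -> Rabs (p' - u) < r -> Rabs (q' - v) < r ->
    dot2 (F p q) (F p' q') > 0.
Proof.
  intros H1 H2 Hnz. pose proof (dot2_self_pos_neq _ Hnz) as Hc.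
  set (eta := sqrt (dot2 (F u v) (F u v)) / 6).
  assert (He : 0 < eta) by (apply Rdiv_lt_0_compat; [apply sqrt_lt_R0|]; lra).
  destruct (H1 (mkposreal _ He)) as [r1 Hr1], (H2 (mkposreal _ He)) as [r2 Hr2]; simpl in *.
  exists (mkposreal _ (Rmin_pos _ _ (cond_pos r1) (cond_pos r2))); simpl.
  intros p q p' q' Hp Hq Hp' Hq'.
  pose proof (Rmin_l r1 r2). pose proof (Rmin_r r1 r2).
  apply (dot2_pos_near (F u v) _ _ eta); [| apply Hr1 | apply Hr2 | apply Hr1 | apply Hr2]; try lra.
  unfold eta. replace (sqrt (dot2 (F u v) (F u v)) / 6 * (sqrt (dot2 (F u v) (F u v)) / 6))
    with (sqrt (dot2 (F u v) (F u v)) * sqrt (dot2 (F u v) (F u v)) / 36) by field.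
  rewrite sqrt_sqrt; lra.
Qed.

Lemma dot2_pos_uniform (F : R -> R -> R * R) :
  (forall u v, 0 <= u <= 1 -> 0 <= v <= 1 ->
     continuity_2d_pt (fun p q => fst (F p q)) u v /\
     continuity_2d_pt (fun p q => snd (F p q)) u v) ->
  (forall u v, 0 <= u <= 1 -> 0 <= v <= 1 -> F u v <> (0, 0)) ->
  exists d, 0 < d /\ forall x y x' y',
    0 <= x <= 1 -> 0 <= y <= 1 -> 0 <= x' <= 1 -> 0 <= y' <= 1 ->
    Rabs (x - x') < d -> Rabs (y - y') < d -> dot2 (F x y) (F x' y') > 0.
Proof.
  intros Hcont Hnz.
  assert (Hlocal : forall u v, { r : posreal | 0 <= u <= 1 -> 0 <= v <= 1 ->
    forall p q p' q', Rabs (p - u) < 2 * r -> Rabs (q - v) < 2 * r ->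
      Rabs (p' - u) < 2 * r -> Rabs (q' - v) < 2 * r -> dot2 (F p q) (F p' q') > 0 }).
  (* [compactness_value_2d] wants a radius at every point; off the square any will do. *)
  { intros u v. apply constructive_indefinite_description.
    destruct (classic (0 <= u <= 1 /\ 0 <= v <= 1)) as [[Hu Hv]|Hout].
    - destruct (Hcont u v Hu Hv) as [H1 H2].
      destruct (dot2_pos_locally F u v H1 H2 (Hnz u v Hu Hv)) as [r Hr].
      exists (mkposreal _ (Rdiv_lt_0_compat _ 2 (cond_pos r) Rlt_0_2)); simpl.
      intros _ _ p q p' q'. replace (2 * (r / 2)) with (pos r) by field. apply Hr.
    - exists (mkposreal 1 Rlt_0_1). tauto. }
  set (r u v := proj1_sig (Hlocal u v)).
  destruct (compactness_value_2d 0 1 0 1 r) as [d Hd].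
  exists d. split; [apply cond_pos|].
  intros x y x' y' Hx Hy Hx' Hy' Dx Dy.
  apply NNPP; intro Hneg; apply (Hd x y Hx Hy); intros [u [v [Hu [Hv [Hxu [Hyv Hdr]]]]]].
  apply Hneg, (proj2_sig (Hlocal u v) Hu Hv); fold (r u v); pose proof (cond_pos (r u v)).
  - lra.
  - lra.
  - replace (x' - u) with ((x' - x) + (x - u)) by ring.
    eapply Rle_lt_trans; [apply Rabs_triang|]. rewrite Rabs_minus_sym. lra.
  - replace (y' - v) with ((y' - y) + (y - v)) by ring.
    eapply Rle_lt_trans; [apply Rabs_triang|]. rewrite Rabs_minus_sym. lra.
Qed.

Definition clamp01 (t : R) : R := Rmax 0 (Rmin 1 t).

Lemma clamp01_in t : 0 <= clamp01 t <= 1.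
Proof. unfold clamp01, Rmax, Rmin. repeat destruct Rle_dec; lra. Qed.

Lemma clamp01_id t : 0 <= t <= 1 -> clamp01 t = t.
Proof. unfold clamp01, Rmax, Rmin. repeat destruct Rle_dec; lra. Qed.

Lemma clamp01_dist s t : Rabs (clamp01 s - clamp01 t) <= Rabs (s - t).
Proof.
  unfold clamp01, Rmax, Rmin, Rabs.
  repeat (destruct Rle_dec || destruct Rcase_abs); lra.
Qed.

Lemma continuity_pt_clamp01 f t :
  continuous_on01 f -> continuity_pt (fun s => f (clamp01 s)) t.
Proof.
  intros Hf. apply continuity_pt_locally. intros eps.
  destruct (Hf (clamp01 t) (clamp01_in t) eps (cond_pos eps)) as [d [Hd Hclose]].
  exists (mkposreal d Hd). intros s Hs. apply Hclose; [apply clamp01_in|].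
  eapply Rle_lt_trans; [apply clamp01_dist | exact Hs].
Qed.

Definition vcontinuous (A : R -> vec) : Prop := forall t,
  continuity_pt (fun s => vx (A s)) t /\ continuity_pt (fun s => vy (A s)) t /\
  continuity_pt (fun s => vz (A s)) t.

Lemma vcontinuous_clamp01 a : vcontinuous_on01 a -> vcontinuous (fun t => a (clamp01 t)).
Proof.
  intros [Hx [Hy Hz]] t.
  split; [|split]; now apply (continuity_pt_clamp01 (fun s => _ (a s))).
Qed.

Lemma continuity_2d_pt_dot A B x y :
  vcontinuous A -> vcontinuous B -> continuity_2d_pt (fun p q => dot (A p) (B q)) x y.
Proof.
  intros HA HB. destruct (HA x) as [Ax [Ay Az]], (HB y) as [Bx [By Bz]].
  unfold dot.
  repeat apply continuity_2d_pt_plus; apply continuity_2d_pt_mult.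
  all: first
    [ apply (continuity_1d_2d_pt_comp _ (fun p _ => p)); [assumption | apply continuity_2d_pt_id1]
    | apply (continuity_1d_2d_pt_comp _ (fun _ q => q)); [assumption | apply continuity_2d_pt_id2] ].
Qed.

Lemma mesh_lt d : 0 < d -> exists N, (0 < N)%nat /\ / INR N < d.
Proof.
  intros Hd. destruct (INR_unbounded (/ d)) as [N HN].
  assert (Hd' : 0 < / d) by (apply Rinv_0_lt_compat; lra).
  assert (HN0 : (0 < N)%nat) by (apply INR_lt; simpl; lra).
  exists N. split; auto.
  rewrite <- (Rinv_inv d). apply Rinv_lt_contravar; [apply Rmult_lt_0_compat|]; lra.
Qed.

Lemma grid_point_in01 N i : (0 < N)%nat -> (i <= N)%nat -> 0 <= INR i / INR N <= 1.
Proof.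
  intros HN Hi. apply lt_INR in HN. apply le_INR in Hi. simpl in HN.
  pose proof (pos_INR i). split.
  - apply Rmult_le_pos; [|apply Rlt_le, Rinv_0_lt_compat]; lra.
  - unfold Rdiv. rewrite <- (Rinv_r (INR N)) by lra.
    apply Rmult_le_compat_r; [apply Rlt_le, Rinv_0_lt_compat|]; lra.
Qed.

Lemma grid_point_dist N i i' : (0 < N)%nat -> (i <= S i')%nat -> (i' <= S i)%nat ->
  Rabs (INR i / INR N - INR i' / INR N) <= / INR N.
Proof.
  intros HN H1 H2. apply lt_INR in HN. simpl in HN.
  replace (INR i / INR N - INR i' / INR N) with ((INR i - INR i') * / INR N) by (field; lra).
  rewrite Rabs_mult, (Rabs_right (/ INR N)) by (apply Rle_ge, Rlt_le, Rinv_0_lt_compat; lra).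
  rewrite <- (Rmult_1_l (/ INR N)) at 2. apply Rmult_le_compat_r;
    [apply Rlt_le, Rinv_0_lt_compat; lra|].
  assert (i = i' \/ i = S i' \/ i' = S i)%nat as [E|[E|E]] by lia; subst;
    rewrite ?S_INR; unfold Rabs; destruct Rcase_abs; lra.
Qed.

Theorem antipodal_square_zero (F : R -> R -> R * R) (w : R * R) :
  (forall u v, 0 <= u <= 1 -> 0 <= v <= 1 ->
     continuity_2d_pt (fun p q => fst (F p q)) u v /\
     continuity_2d_pt (fun p q => snd (F p q)) u v) ->
  (forall t, 0 <= t <= 1 -> F t t = w) ->
  (forall t, 0 <= t <= 1 -> F t 1 = opp2 (F 0 t)) ->
  exists u v, 0 <= u <= 1 /\ 0 <= v <= 1 /\ F u v = (0, 0).
Proof.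
  intros Hcont Hdiag Hlast. apply NNPP; intros Hnz.
  destruct (dot2_pos_uniform F Hcont) as [d [Hd Hunif]].
  { intros u v Hu Hv E. apply Hnz. now exists u, v. }
  destruct (mesh_lt d Hd) as [N [HN HNd]].
  set (t i := INR i / INR N).
  apply (acute_grid_antipodal_absurd (fun i j => F (t i) (t j)) N w).
  - intros i j i' j' Hi Hj Hi' Hj' Ii Ii' Jj Jj'.
    apply Hunif; try apply grid_point_in01; auto;
      eapply Rle_lt_trans; try apply grid_point_dist; eauto.
  - intros i Hi. apply Hdiag, grid_point_in01; auto.
  - intros i Hi.
    assert (tN : t N = 1) by (unfold t; field; apply not_0_INR; lia).
    assert (t0 : t 0%nat = 0) by (unfold t; simpl; field; apply not_0_INR; lia).
    rewrite tN, t0. apply Hlast, grid_point_in01; auto.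
Qed.

Lemma dot_comm u v : dot u v = dot v u.
Proof. unfold dot. ring. Qed.

Lemma cross_vopp x y : cross x (vopp y) = vopp (cross x y).
Proof.
  destruct x as [[? ?] ?], y as [[? ?] ?]. unfold cross, vopp, vx, vy, vz; simpl.
  f_equal; [f_equal|]; ring.
Qed.

Lemma on_line_foot a m : oriented_line a m -> on_line a m (cross a m).
Proof.
  destruct a as [[a1 a2] a3], m as [[m1 m2] m3].
  unfold oriented_line, on_line, dot, cross, vx, vy, vz; simpl. intros [H1 H2].
  f_equal; [f_equal|]; nsatz.
Qed.

Lemma reversed_line_moment a m m' : oriented_line a m ->
  (forall x, on_line (vopp a) m' x <-> on_line a m x) -> m' = vopp m.
Proof.
  intros Hl Hsame. pose proof (on_line_foot a m Hl) as Hfoot.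
  apply Hsame in Hfoot. unfold on_line in *. rewrite cross_vopp in Hfoot.
  rewrite <- Hfoot, on_line_foot; auto.
Qed.

(* [dot a n + dot m b] is the reciprocal product of the Pluecker coordinates:
   perpendicular lines with vanishing reciprocal product meet. *)
Lemma perpendicular_lines_meet a m b n : oriented_line a m -> oriented_line b n ->
  dot a b = 0 -> dot a n + dot m b = 0 -> exists x, on_line a m x /\ on_line b n x.
Proof.
  destruct a as [[a1 a2] a3], m as [[m1 m2] m3], b as [[b1 b2] b3], n as [[n1 n2] n3].
  unfold oriented_line, on_line, dot, cross, vx, vy, vz; simpl.
  intros [Ha Ham] [Hb Hbn] Hab Hrec.
  set (l := n1 * (a2 * b3 - a3 * b2) + n2 * (a3 * b1 - a1 * b3) + n3 * (a1 * b2 - a2 * b1)).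
  exists ((a2 * m3 - a3 * m2 + l * a1, a3 * m1 - a1 * m3 + l * a2), a1 * m2 - a2 * m1 + l * a3).
  simpl. unfold l. split; (f_equal; [f_equal|]); nsatz.
Qed.

Theorem lemma3p1 (a m : R -> vec) :
  line_family a m ->
  (* L_1 is L_0 with the opposite orientation *)
  a 1 = vopp (a 0) ->
  (forall x : vec, on_line (a 1) (m 1) x <-> on_line (a 0) (m 0) x) ->
  exists r s : R, 0 <= r <= 1 /\ 0 <= s <= 1 /\
    (* perpendicular *)
    dot (a r) (a s) = 0 /\
    (* intersecting *)
    (exists x : vec, on_line (a r) (m r) x /\ on_line (a s) (m s) x).
Proof.
  intros [Hline [Ha Hm]] Ha1 Hsame.
  assert (Hm1 : m 1 = vopp (m 0)).
  { apply (reversed_line_moment (a 0)); [apply Hline; lra|]. now rewrite <- Ha1. }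
  set (A t := a (clamp01 t)). set (M t := m (clamp01 t)).
  assert (HA : vcontinuous A) by now apply vcontinuous_clamp01.
  assert (HM : vcontinuous M) by now apply vcontinuous_clamp01.
  destruct (antipodal_square_zero
    (fun p q => (dot (A p) (A q), dot (A p) (M q) + dot (M p) (A q))) (1, 0))
    as [r [s [Hr [Hs E]]]]; simpl.
  - intros u v _ _. split; [|apply continuity_2d_pt_plus]; now apply continuity_2d_pt_dot.
  - intros t Ht. unfold A, M. rewrite clamp01_id by auto.
    destruct (Hline t Ht) as [H1 H2]. rewrite H1, (dot_comm (m t)), H2. f_equal. ring.
  - intros t Ht. unfold A, M, opp2. rewrite !clamp01_id by lra. simpl.
    rewrite Ha1, Hm1. unfold dot, vopp, vx, vy, vz; simpl. f_equal; ring.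
  - injection E as HG HH. unfold A, M in HG, HH. rewrite !clamp01_id in HG, HH by auto.
    exists r, s. do 3 (split; auto). apply perpendicular_lines_meet; auto.
Qed.
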